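(* Let $L$ be a code loop with basis $\mathcal{B}=\{a_1,\dots,a_n\}$ and let $f$ be a half-automorphism of $L$. Then $\{f(a_1),\dots,f(a_n)\}$ is a basis of $L$, and its characteristic vector coincides with the characteristic vector of $L$ related to $\mathcal{B}$.
   Context: A code loop is a finite Moufang loop (loop satisfying $(x\cdot zx)y=x(z\cdot xy)$) with a unique nontrivial square, denoted $-1$; squares, commutators and associators of a code loop lie in $\{1,-1\}\subseteq Z(L)$. The commutator $[x,y]$ and associator $(x,y,z)$ are defined by $xy=(yx)[x,y]$ and $(xy)z=(x(yz))(x,y,z)$. A basis of a code loop is a minimal generating set; its size is the rank. A half-automorphism of $L$ is a bijection $f:L\to L$ with $f(xy)\in\{f(x)f(y),f(y)f(x)\}$ for all $x,y$. For a basis $\{a_1,\dots,a_n\}$ the characteristic vector is $(\lambda_1,\dots,\lambda_n,\lambda_{1,2},\dots,\lambda_{n-1,n},\lambda_{1,2,3},\dots,\lambda_{n-2,n-1,n})$ with entries in $\{0,1\}$ determined by $a_i^2=(-1)^{\lambda_i}$, $[a_i,a_j]=(-1)^{\lambda_{i,j}}$ ($i<j$), $(a_i,a_j,a_k)=(-1)^{\lambda_{i,j,k}}$ ($i<j<k$). *)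

From mathcomp Require Import all_boot all_order.
Set Implicit Arguments. Unset Strict Implicit. Unset Printing Implicit Defensive.

Section Loops.
Variables (T : finType) (mul : T -> T -> T) (e : T).

(* (T, mul, e) is a loop: e is a two-sided identity and all left and right
   translations are bijections (injective = bijective on a finite type). *)
Definition is_loop : Prop :=
  (forall x, mul e x = x /\ mul x e = x) /\
  (forall a, injective (mul a)) /\ (forall a, injective (fun x => mul x a)).

Definition moufang : Prop :=
  forall x y z, mul (mul x (mul z x)) y = mul x (mul z (mul x y)).

Definition ldiv (a b : T) : T := odflt e [pick c | mul a c == b].
Definition rdiv (b a : T) : T := odflt e [pick c | mul c a == b].

Definition commutator (x y : T) : T := ldiv (mul y x) (mul x y).
Definition associator (x y z : T) : T :=
  ldiv (mul x (mul y z)) (mul (mul x y) z).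

Definition central (c : T) : Prop :=
  forall x y, mul c x = mul x c /\
    mul (mul c x) y = mul c (mul x y) /\
    mul (mul x c) y = mul x (mul c y) /\
    mul (mul x y) c = mul x (mul y c).

(* Code loop: finite Moufang loop with a unique nontrivial square m (= -1);
   squares, commutators and associators lie in {e, m}, which is central. *)
Definition code_loop (m : T) : Prop :=
  is_loop /\ moufang /\ m <> e /\ (exists x, mul x x = m) /\
  (forall x, mul x x = e \/ mul x x = m) /\
  (forall x y, commutator x y = e \/ commutator x y = m) /\
  (forall x y z, associator x y z = e \/ associator x y z = m) /\
  central e /\ central m.

Definition subloop (A : {set T}) : bool :=
  [&& e \in A,
      [forall x in A, forall y in A, mul x y \in A],
      [forall x in A, forall y in A, ldiv x y \in A] &
      [forall x in A, forall y in A, rdiv x y \in A]].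

Definition gen (S : {set T}) : {set T} :=
  \bigcap_(A | subloop A && (S \subset A)) A.

Definition is_basis (n : nat) (a : 'I_n -> T) : Prop :=
  [/\ injective a,
      gen [set a i | i : 'I_n] = setT &
      forall B : {set T}, B \proper [set a i | i : 'I_n] -> gen B != setT].

Definition half_aut (f : T -> T) : Prop :=
  bijective f /\
  forall x y, f (mul x y) = mul (f x) (f y) \/ f (mul x y) = mul (f y) (f x).

(* entries of the characteristic vector of a w.r.t. -1 = m (as booleans:
   true = 1, false = 0) *)
Definition char_sq (m : T) n (a : 'I_n -> T) (i : 'I_n) : bool :=
  mul (a i) (a i) == m.
Definition char_comm (m : T) n (a : 'I_n -> T) (i j : 'I_n) : bool :=
  commutator (a i) (a j) == m.
Definition char_assoc (m : T) n (a : 'I_n -> T) (i j k : 'I_n) : bool :=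
  associator (a i) (a j) (a k) == m.

Definition same_charvec (m : T) n (a b : 'I_n -> T) : Prop :=
  (forall i, char_sq m a i = char_sq m b i) /\
  (forall i j : 'I_n, i < j -> char_comm m a i j = char_comm m b i j) /\
  (forall i j k : 'I_n, i < j -> j < k ->
      char_assoc m a i j k = char_assoc m b i j k).

End Loops.

(* A half-automorphism [f] fixes [e] and, because [-1] is a square, also [-1];
   hence it preserves squares.  On a finite loop the inverse of [f] is an
   iterate of [f], so it is again a half-automorphism.  Preimages of subloops
   under half-homomorphisms are subloops, so [f] and its inverse both carry
   generating sets to generating sets, and [f] maps bases to bases.  In a code
   loop [[x,y] = -1] exactly when [x] and [y] do not commute, and commuting
   pairs are preserved by [f] and its inverse; associators are then preserved
   by the identity [(x,y,z) = [z,x][z,y][z,xy]], a consequence of the Moufang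
   law. *)

From mathcomp Require Import all_boot all_order.
From mathcomp Require fingroup perm.

Set Implicit Arguments.
Unset Strict Implicit.
Unset Printing Implicit Defensive.

Section HalfHom.
Variables (T : Type) (mul : T -> T -> T).

Definition half_hom (g : T -> T) : Prop :=
  forall x y, g (mul x y) = mul (g x) (g y) \/ g (mul x y) = mul (g y) (g x).

Lemma half_hom_comp g h : half_hom g -> half_hom h -> half_hom (g \o h).
Proof.
move=> Hg Hh x y /=.
by case: (Hh x y) => ->;
  [case: (Hg (h x) (h y)) | case: (Hg (h y) (h x))]; auto.
Qed.

Lemma half_hom_iter g k : half_hom g -> half_hom (iter k g).
Proof.
move=> Hg; elim: k => [|k IHk] x y; first by left.
exact: (half_hom_comp Hg IHk x y).
Qed.

(* [g (x y)], [g (y x)] both lie in [{g x g y, g y g x}], here a singleton. *)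
Lemma half_hom_commute g x y : injective g -> half_hom g ->
  mul (g x) (g y) = mul (g y) (g x) -> mul x y = mul y x.
Proof.
move=> g_inj Hg Cg; apply: g_inj.
by case: (Hg x y) => ->; case: (Hg y x) => ->.
Qed.

End HalfHom.

Section IterInverse.
Import fingroup perm.

Lemma inj_iter_id (T : finType) (f : T -> T) :
  injective f -> exists k, iter k.+1 f =1 id.
Proof.
move=> f_inj; set p := perm f_inj.
exists #[p]%g.-1 => x; rewrite prednK ?order_gt0 //.
have := permX p x #[p]%g; rewrite expg_order perm1 => iter_px.
rewrite {2}iter_px.
by apply: eq_iter => y; rewrite permE.
Qed.

End IterInverse.

(* On a finite carrier the inverse of an injective half-homomorphism is one of
   its iterates, hence again a half-homomorphism. *)
Lemma half_hom_inverse (T : finType) (mul : T -> T -> T) (g : T -> T) :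
  injective g -> half_hom mul g ->
  exists h, [/\ half_hom mul h, cancel g h & cancel h g].
Proof.
move=> g_inj Hg; have [k iterK] := inj_iter_id g_inj.
exists (iter k g); split; first exact: half_hom_iter.
- by move=> x; rewrite -iterSr iterK.
- by move=> x; rewrite -iterS iterK.
Qed.

Lemma half_hom_commuteE (T : finType) (mul : T -> T -> T) (g : T -> T) x y :
  injective g -> half_hom mul g ->
  (mul (g x) (g y) == mul (g y) (g x)) = (mul x y == mul y x).
Proof.
move=> g_inj Hg; have [h [Hh gK hK]] := half_hom_inverse g_inj Hg.
apply/eqP/eqP; first exact: half_hom_commute g_inj Hg.
move=> Cxy; apply: (half_hom_commute (can_inj hK) Hh).
by rewrite !gK.
Qed.

Section Loop.
Variables (T : finType) (mul : T -> T -> T) (e : T).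
Hypothesis loopL : is_loop mul e.

Lemma mul1x x : mul e x = x. Proof. by case: loopL => /(_ x)[]. Qed.
Lemma mulx1 x : mul x e = x. Proof. by case: loopL => /(_ x)[]. Qed.
Lemma mulI a : injective (mul a). Proof. by case: loopL => _ []. Qed.
Lemma mulIr a : injective (mul^~ a). Proof. by case: loopL => _ []. Qed.

Lemma ldivK a b : mul a (ldiv mul e a b) = b.
Proof.
rewrite /ldiv; case: pickP => [c /eqP //| none].
have [g _ gK] := injF_bij (@mulI a).
by have := none (g b); rewrite gK eqxx.
Qed.

Lemma rdivK b a : mul (rdiv mul e b a) a = b.
Proof.
rewrite /rdiv; case: pickP => [c /eqP //| none].
have [g _ gK] := injF_bij (@mulIr a).
by have := none (g b); rewrite /= gK eqxx.
Qed.

Lemma ldiv_eq a b c : mul a c = b -> ldiv mul e a b = c.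
Proof. by move=> acb; apply: (@mulI a); rewrite ldivK. Qed.

Lemma rdiv_eq a b c : mul c a = b -> rdiv mul e b a = c.
Proof. by move=> cab; apply: (@mulIr a); rewrite /= rdivK. Qed.

Lemma central_mulA c x y : central mul c -> mul (mul c x) y = mul c (mul x y).
Proof. by move=> Zc; case: (Zc x y) => _ []. Qed.

Lemma central_mulAr c x y : central mul c -> mul x (mul y c) = mul (mul x y) c.
Proof. by move=> Zc; case: (Zc x y) => _ [_ []]. Qed.

Lemma central_mulAC c x y : central mul c -> mul (mul x c) y = mul (mul x y) c.
Proof.
by move=> Zc; case: (Zc x y) => _ [_ [-> ->]]; case: (Zc y x) => ->.
Qed.

Lemma half_hom_e g : half_hom mul g -> g e = e.
Proof.
move=> Hg; apply: (@mulI (g e)); rewrite mulx1.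
by have := Hg e e; rewrite mul1x => -[] <-.
Qed.

Lemma half_hom_quotient g x y c : half_hom mul g ->
  mul x c = y \/ mul c x = y ->
  g c = ldiv mul e (g x) (g y) \/ g c = rdiv mul e (g y) (g x).
Proof.
move=> Hg xcy.
have [gxc | gcx] : g y = mul (g x) (g c) \/ g y = mul (g c) (g x).
  by case: xcy => <-; [case: (Hg x c) | case: (Hg c x)]; auto.
- by left; rewrite (ldiv_eq (esym gxc)).
- by right; rewrite (rdiv_eq (esym gcx)).
Qed.

Lemma forall2_inP (A : {set T}) (op : T -> T -> T) :
  reflect {in A &, forall x y, op x y \in A}
          [forall x in A, forall y in A, op x y \in A].
Proof.
apply: (iffP forall_inP) => [opA x y xA | opA x xA].
  exact: (forall_inP (opA x xA) y).
by apply/forall_inP => y; apply: opA.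
Qed.

Lemma subloopP (A : {set T}) :
  reflect [/\ e \in A, {in A &, forall x y, mul x y \in A},
              {in A &, forall x y, ldiv mul e x y \in A}
            & {in A &, forall x y, rdiv mul e x y \in A}]
          (subloop mul e A).
Proof.
apply: (iffP and4P) => [[eA /forall2_inP mA /forall2_inP lA /forall2_inP rA]|].
  by split.
by case=> eA mA lA rA; split=> //; apply/forall2_inP.
Qed.

Lemma subloop_preim g (A : {set T}) : half_hom mul g ->
  subloop mul e A -> subloop mul e [set y | g y \in A].
Proof.
move=> Hg /subloopP[eA mA lA rA].
apply/subloopP; split=> [|x y|x y|x y]; rewrite !inE ?half_hom_e // => xA yA.
- by case: (Hg x y) => ->; [apply: mA | apply: mA].
- have [->|->] := half_hom_quotient Hg (or_introl (ldivK x y)).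
  + exact: lA.
  + exact: rA.
- have [->|->] := half_hom_quotient Hg (or_intror (rdivK x y)).
  + exact: lA.
  + exact: rA.
Qed.

Lemma half_hom_gen_imset g (S : {set T}) : half_hom mul g -> bijective g ->
  gen mul e S = setT -> gen mul e (g @: S) = setT.
Proof.
move=> Hg [h gK hK] genS; apply/setP => x; rewrite in_setT.
apply/bigcapP => A /andP[subA sSA]; rewrite -[x]hK.
have : h x \in gen mul e S by rewrite genS in_setT.
move/bigcapP/(_ [set y | g y \in A]); rewrite inE; apply.
rewrite subloop_preim //=; apply/subsetP => y yS.
by rewrite inE (subsetP sSA) // imset_f.
Qed.

Lemma half_aut_basis n (a : 'I_n -> T) f : half_aut mul f ->
  is_basis mul e a -> is_basis mul e (fun i => f (a i)).
Proof.
move=> [f_bij Hf] [a_inj gen_a min_a].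
have [h [Hh fK hK]] := half_hom_inverse (bij_inj f_bij) Hf.
have imfaE : [set f (a i) | i : 'I_n] = f @: [set a i | i : 'I_n].
  exact: (imset_comp f a).
have hfaE : h @: (f @: [set a i | i : 'I_n]) = [set a i | i : 'I_n].
  by rewrite -imset_comp (eq_imset _ fK) imset_id.
split; first exact: (inj_comp (bij_inj f_bij) a_inj).
  by rewrite imfaE half_hom_gen_imset.
move=> B ltB; apply/negP => /eqP genB.
rewrite imfaE in ltB; have := imset_proper (in2W (can_inj hK)) ltB.
by rewrite hfaE => /min_a; rewrite half_hom_gen_imset ?eqxx //; exists f.
Qed.

End Loop.

Arguments mulI {T mul e} loopL a [x1 x2].
Arguments mulIr {T mul e} loopL a [x1 x2].

Section CodeLoop.
Variables (T : finType) (mul : T -> T -> T) (e m : T).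
Hypothesis CL : code_loop mul e m.

Lemma code_loop_is_loop : is_loop mul e. Proof. by case: CL. Qed.
Lemma code_loop_moufang : moufang mul. Proof. by case: CL => _ []. Qed.
Lemma m_neq_e : m <> e. Proof. by case: CL => _ [_ []]. Qed.
Lemma exists_sq_m : exists x, mul x x = m.
Proof. by case: CL => _ [_ [_ []]]. Qed.
Lemma sq_e_or_m x : mul x x = e \/ mul x x = m.
Proof. by case: CL => _ [_ [_ [_ []]]]. Qed.
Lemma commutator_e_or_m x y :
  commutator mul e x y = e \/ commutator mul e x y = m.
Proof. by case: CL => _ [_ [_ [_ [_ []]]]]. Qed.
Lemma associator_e_or_m x y z :
  associator mul e x y z = e \/ associator mul e x y z = m.
Proof. by case: CL => _ [_ [_ [_ [_ [_ []]]]]]. Qed.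
Lemma central_e : central mul e.
Proof. by case: CL => _ [_ [_ [_ [_ [_ [_ []]]]]]]. Qed.
Lemma central_m : central mul m.
Proof. by case: CL => _ [_ [_ [_ [_ [_ [_ []]]]]]]. Qed.

Let loopL := code_loop_is_loop.

(* [sgn b] is (-1)^b. *)
Definition sgn (b : bool) : T := if b then m else e.

Lemma central_sgn b : central mul (sgn b).
Proof. by case: b; [exact: central_m | exact: central_e]. Qed.

Lemma mul_mm : mul m m = e.
Proof.
case: (sq_e_or_m m) => // mm_m; case: m_neq_e.
by apply: (mulI loopL m); rewrite mm_m mulx1.
Qed.

Lemma mul_sgnA x b1 b2 :
  mul (mul x (sgn b1)) (sgn b2) = mul x (sgn (b1 (+) b2)).
Proof.
rewrite -central_mulAr; last exact: central_sgn.
by case: b1; case: b2; rewrite /= ?mul_mm ?(mulx1 loopL) ?(mul1x loopL).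
Qed.


Lemma mulm_neq x : mul x m != x.
Proof.
apply/eqP => xm; case: m_neq_e.
by apply: (mulI loopL x); rewrite xm mulx1.
Qed.

Lemma mul_sgnI x : injective (fun b => mul x (sgn b)).
Proof.
by move=> [] [] //= xmx; have := mulm_neq x;
  [rewrite xmx | rewrite -xmx]; rewrite (mulx1 loopL) eqxx.
Qed.

Lemma sgn_eqm (c : T) : c = e \/ c = m -> sgn (c == m) = c.
Proof.
case=> ->; rewrite /sgn ?eqxx //.
by case: eqP => // em; case: m_neq_e.
Qed.

Lemma commutator_sgnE x y :
  mul (mul y x) (sgn (commutator mul e x y == m)) = mul x y.
Proof. by rewrite sgn_eqm ?ldivK //; apply: commutator_e_or_m. Qed.

Lemma associator_sgnE x y z :
  mul (mul x (mul y z)) (sgn (associator mul e x y z == m)) = mul (mul x y) z.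
Proof. by rewrite sgn_eqm ?ldivK //; apply: associator_e_or_m. Qed.


Lemma commutator_mE x y : (commutator mul e x y == m) = (mul x y != mul y x).
Proof.
rewrite -[in mul x y](commutator_sgnE x y).
by case: (_ == m); rewrite /= ?mulm_neq ?(mulx1 loopL) ?eqxx.
Qed.

Lemma commutator_mulCr z x y :
  (commutator mul e z (mul y x) == m) = (commutator mul e z (mul x y) == m).
Proof.
have Zs := central_sgn (commutator mul e y x == m).
rewrite !commutator_mE -(commutator_sgnE y x).
rewrite (central_mulAr _ _ Zs) (central_mulAC _ _ Zs).
by rewrite (inj_eq (mulIr loopL _)).
Qed.

Lemma left_alternative x y : mul x (mul x y) = mul (mul x x) y.
Proof. by have := code_loop_moufang x y e; rewrite !(mul1x loopL). Qed.

Lemma central_sq x : central mul (mul x x).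
Proof. by case: (sq_e_or_m x) => ->; [exact: central_e | exact: central_m]. Qed.

(* Expand both sides of the Moufang identity [(x . zx) y = x (z . xy)] into
   [(x x)(y z)] times signs: the left side picks up [[z,x]] and [[z,y]], the
   right side [(x,y,z)] and [[z,xy]]. *)
Lemma associator_commutatorE x y z :
  (associator mul e x y z == m) =
  (commutator mul e z x == m) (+) (commutator mul e z y == m)
    (+) (commutator mul e z (mul x y) == m).
Proof.
set a := associator _ _ x y z == m; set k1 := commutator _ _ z x == m.
set k2 := commutator _ _ z y == m; set k3 := commutator _ _ z (mul x y) == m.
have Zs b := central_sgn b; have Zxx := central_sq x.
set w := mul (mul x x) (mul y z).
have lhsE : mul (mul x (mul z x)) y = mul w (sgn (k2 (+) k1)).
  rewrite -(commutator_sgnE z x) -/k1 (central_mulAr _ _ (Zs _)).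
  rewrite (central_mulAC _ _ (Zs _)) left_alternative (central_mulA _ _ Zxx).
  by rewrite -(commutator_sgnE z y) -/k2 (central_mulAr _ _ (Zs _)) mul_sgnA.
have rhsE : mul x (mul z (mul x y)) = mul w (sgn (a (+) k3)).
  rewrite -(commutator_sgnE z (mul x y)) -/k3 -(associator_sgnE x y z) -/a.
  by rewrite mul_sgnA (central_mulAr _ _ (Zs _)) left_alternative.
have := code_loop_moufang x y z; rewrite lhsE rhsE {lhsE rhsE} => /mul_sgnI.
by case: a; case: k1; case: k2; case: k3.
Qed.

Lemma half_hom_m g : half_hom mul g -> injective g -> g m = m.
Proof.
move=> Hg g_inj; have [t tt_m] := exists_sq_m.
have gm : g m = mul (g t) (g t) by rewrite -tt_m; case: (Hg t t).
case: (sq_e_or_m (g t)) => gtt; last by rewrite gm.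
by case: m_neq_e; apply: g_inj; rewrite (half_hom_e loopL Hg) gm.
Qed.

Lemma half_hom_sq g x : half_hom mul g -> injective g ->
  (mul (g x) (g x) == m) = (mul x x == m).
Proof.
move=> Hg g_inj; have -> : mul (g x) (g x) = g (mul x x) by case: (Hg x x).
by rewrite -{1}(half_hom_m Hg g_inj) (inj_eq g_inj).
Qed.

Lemma half_hom_commutator g x y : half_hom mul g -> injective g ->
  (commutator mul e (g x) (g y) == m) = (commutator mul e x y == m).
Proof.
by move=> Hg g_inj; rewrite !commutator_mE (half_hom_commuteE x y g_inj Hg).
Qed.

Lemma half_hom_associator g x y z : half_hom mul g -> injective g ->
  (associator mul e (g x) (g y) (g z) == m) = (associator mul e x y z == m).
Proof.
move=> Hg g_inj; rewrite !associator_commutatorE !half_hom_commutator //.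
have -> : (commutator mul e (g z) (mul (g x) (g y)) == m) =
          (commutator mul e (g z) (g (mul x y)) == m).
  by case: (Hg x y) => -> //; rewrite commutator_mulCr.
by rewrite half_hom_commutator.
Qed.

End CodeLoop.

Theorem corollary2p7 (T : finType) (mul : T -> T -> T) (e m : T)
    (CL : code_loop mul e m) (n : nat) (a : 'I_n -> T)
    (Ba : is_basis mul e a) (f : T -> T) (Hf : half_aut mul f) :
  is_basis mul e (fun i => f (a i)) /\
  same_charvec mul e m (fun i => f (a i)) a.
Proof.
split; first exact: (half_aut_basis (code_loop_is_loop CL) Hf Ba).
have [/bij_inj f_inj f_hom] := Hf.
split; [move=> i | split=> [i j _ | i j k _ _]].
- exact: (half_hom_sq CL _ f_hom f_inj).
- exact: (half_hom_commutator CL _ _ f_hom f_inj).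
- exact: (half_hom_associator CL _ _ _ f_hom f_inj).
Qed.
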